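(* For all $x_1,x_2,y \in \mathbb{T}$ with $x_1 \neq x_2$, there exists $h \in \mathcal{H}$ such that \[ \max\{d(\gamma^{x_1}_h(1),y),d(\gamma^{x_2}_h(1),y)\} \leq \tfrac{3}{2}d(x_1,x_2). \]
   Context: $\mathcal H$ is the space of piecewise constant compactly supported functions $h=(h_1,h_{-1}):\mathbb{R}^+\to\mathbb{R}^2$. For fixed $\sigma>0$ and $x\in\mathbb{R}$, $\gamma^x_h$ is the solution of the control ODE $\frac{\mathrm{d}\gamma^x_h}{\mathrm{d}t}=c+\sigma^2\big(\mathfrak a(\gamma^x_h)-\tfrac12\sum_{k\in\mathbb{Z}}\mathfrak b_k'(\gamma^x_h)\mathfrak b_k(\gamma^x_h)\big)+\sigma\big(\mathfrak b_1(\gamma^x_h)h_1+\mathfrak b_{-1}(\gamma^x_h)h_{-1}\big)$, $\gamma^x_h(0)=x$, viewed on $\mathbb{T}=\mathbb{R}/\mathbb{Z}$ with torus distance $d$. Here, for a traveling pulse $u^*$ (speed $c$) of $\mathrm{d}u=Au\,\mathrm{d}t+f(u)\,\mathrm{d}t$ on $\mathcal X=H^{s,p}(\mathbb{R};\mathbb{R}^n)$, with $\mathcal T_xf=f(\cdot-x)$, isochron map $\pi_{\mathrm{iso}}$ (upright $\pi$ in the paper, not the circle constant; defined by $\lim_{t\to\infty}\|u^v(t)-u^*(\cdot-ct-\pi_{\mathrm{iso}}(v))\|_{\mathcal X}=0$), basis $e_k(x)=\sqrt2\cos(2\pi kx)$ ($k>0$), $e_0=1$, $e_k(x)=\sqrt2\sin(2\pi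 kx)$ ($k<0$), coefficients $\alpha_k$, nonlinearity $g$: $\mathfrak a(x)=\tfrac12\sum_k\alpha_k^2\big(\pi_{\mathrm{iso}}'(\mathcal T_xu^* )[g'(\mathcal T_xu^* )g(\mathcal T_xu^* )e_k^2]+\pi_{\mathrm{iso}}''(\mathcal T_xu^* )[g(\mathcal T_xu^* )e_k,g(\mathcal T_xu^* )e_k]\big)$, $\mathfrak b_k(x)=\alpha_k\pi_{\mathrm{iso}}'(\mathcal T_xu^* )[g(\mathcal T_xu^* )e_k]$. These are smooth, 1-periodic, and $\mathrm{span}\{\mathfrak b_1,\mathfrak b_{-1}\}=\{L\sin(2\pi\cdot+\eta):L,\eta\in\mathbb{R}\}$. *)

From Stdlib Require Import Reals.
From Coquelicot Require Import Coquelicot.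
Open Scope R_scope.

(* Torus distance on T = R/Z, for lifts a b : R. *)
Definition tdist (a b : R) : R :=
  Rmin (frac_part (a - b)) (1 - frac_part (a - b)).

Definition smooth (f : R -> R) : Prop := forall (n : nat) (x : R), ex_derive_n f n x.

Definition periodic1 (f : R -> R) : Prop := forall x, f (x + 1) = f x.

Definition span_is_sinusoids (b1 bm1 : R -> R) : Prop :=
  (forall al be : R, exists L eta : R, forall x,
      al * b1 x + be * bm1 x = L * sin (2 * PI * x + eta)) /\
  (forall L eta : R, exists al be : R, forall x,
      al * b1 x + be * bm1 x = L * sin (2 * PI * x + eta)).

Definition pc_cs (h : R -> R * R) : Prop :=
  exists (n : nat) (t : nat -> R) (v : nat -> R * R),
    t O = 0 /\
    (forall i, (i < n)%nat -> t i < t (S i)) /\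
    (forall i s, (i < n)%nat -> t i <= s < t (S i) -> h s = v i) /\
    (forall s, t n <= s -> h s = (0, 0)).

(* Drift of the control ODE:  c + sigma^2 (a(x) - 1/2 * S(x)),
   where S stands for sum_k b_k'(x) b_k(x). *)
Definition drift (c sigma : R) (a S : R -> R) (x : R) : R :=
  c + sigma ^ 2 * (a x - / 2 * S x).

(* gam is a (Caratheodory) solution on [0,1] of the control ODE
   d gam/dt = drift(gam) + sigma (b1(gam) h1 + bm1(gam) hm1),  gam(0) = x,
   in integral form. *)
Definition ctrl_sol (c sigma : R) (a S b1 bm1 : R -> R) (h : R -> R * R)
    (x : R) (gam : R -> R) : Prop :=
  forall t, 0 <= t <= 1 ->
    is_RInt (fun s => drift c sigma a S (gam s)
                      + sigma * (b1 (gam s) * fst (h s) + bm1 (gam s) * snd (h s)))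
            0 t (gam t - x).

(* Freezing the control on a time interval turns the control ODE into an autonomous
   scalar ODE whose field is the drift plus an arbitrary sinusoid -K sin(2 pi (w - z))
   (span hypothesis).  For K large this field points towards z + Z from both sides on
   arcs of radius 7/16, so in time 1/2 it carries every point within 3/8 + 2 eps of a
   lift of z to within 2 eps of it.  One of the quarters 0, 1/4, 1/2, 3/4 is within 3/8
   of x1, x2 and y modulo 1; steering to it on [0, 1/2) and then to y on [1/2, 1) brings
   both endpoints within 2 eps <= d(x1, x2) of y.  The fields are Lipschitz and bounded,
   so Picard iteration provides the solutions. *)

From Stdlib Require Import Reals Lra Lia Classical ZArith.
From Coquelicot Require Import Coquelicot.
Open Scope R_scope.

(** * Lipschitz bounded functions *)

Definition lipschitz (f : R -> R) (L : R) : Prop :=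
  forall x y, Rabs (f x - f y) <= L * Rabs (x - y).

Definition bounded_by (f : R -> R) (M : R) : Prop := forall x, Rabs (f x) <= M.

Definition lip_bounded (f : R -> R) : Prop :=
  exists L M, 0 <= L /\ 0 <= M /\ lipschitz f L /\ bounded_by f M.

Lemma bounded_by_ge0 f M : bounded_by f M -> 0 <= M.
Proof. intros HB. pose proof (HB 0). pose proof (Rabs_pos (f 0)). lra. Qed.

Lemma lipschitz_continuous f L : lipschitz f L -> forall x, continuous f x.
Proof.
  intros HL x. apply continuity_pt_filterlim. intros eps Heps.
  pose proof (Rabs_pos L) as HL0. pose proof (Rle_abs L).
  exists (eps / (Rabs L + 1)). split; [apply Rdiv_lt_0_compat; lra|].
  intros y [_ Hy]. simpl in *. unfold R_dist in *.
  apply Rmult_lt_compat_l with (r := Rabs L + 1) in Hy; [|lra].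
  replace ((Rabs L + 1) * (eps / (Rabs L + 1))) with eps in Hy by (field; lra).
  pose proof (HL y x). pose proof (Rabs_pos (y - x)). nra.
Qed.

Lemma periodic1_IZR f : periodic1 f -> forall x (k : Z), f (x + IZR k) = f x.
Proof.
  intros Hp.
  assert (Hnat : forall x n, f (x + INR n) = f x).
  { intros x n. induction n as [|n IH]; [simpl; f_equal; ring|].
    rewrite S_INR, <- IH, <- (Hp (x + INR n)). f_equal; ring. }
  intros x k. destruct (Z_le_gt_dec 0 k).
  - rewrite <- (Z2Nat.id k), <- INR_IZR_INZ by lia. apply Hnat.
  - replace k with (- Z.of_nat (Z.to_nat (- k)))%Z by lia.
    rewrite opp_IZR, <- INR_IZR_INZ, <- (Hnat (x + - _) (Z.to_nat (- k))).
    f_equal; ring.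
Qed.

Lemma periodic1_frac_part f : periodic1 f -> forall x, f x = f (frac_part x).
Proof.
  intros Hp x. rewrite <- (periodic1_IZR f Hp (frac_part x) (Int_part x)).
  unfold frac_part. f_equal; ring.
Qed.

Lemma periodic1_continuous_bounded f :
  periodic1 f -> (forall x, continuous f x) -> exists B, bounded_by f B.
Proof.
  intros Hp Hc.
  assert (Hc01 : forall x, 0 <= x <= 1 -> continuity_pt f x)
    by (intros; apply continuity_pt_filterlim, Hc).
  destruct (continuity_ab_maj f 0 1) as [xM [HM _]]; [lra|exact Hc01|].
  destruct (continuity_ab_min f 0 1) as [xm [Hm _]]; [lra|exact Hc01|].
  exists (Rabs (f xM) + Rabs (f xm)). intro x.
  rewrite (periodic1_frac_part f Hp x). destruct (base_fp x).
  specialize (HM (frac_part x) ltac:(lra)). specialize (Hm (frac_part x) ltac:(lra)).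
  pose proof (Rle_abs (f xM)). pose proof (Rabs_pos (f xM)).
  pose proof (Rle_abs (- f xm)). rewrite Rabs_Ropp in *. pose proof (Rabs_pos (f xm)).
  apply Rabs_le. lra.
Qed.

Lemma periodic1_Derive f : periodic1 f -> (forall x, ex_derive f x) -> periodic1 (Derive f).
Proof.
  intros Hp Hd x.
  assert (Hshift : Derive (fun t => t + 1) x = 1)
    by (apply is_derive_unique; auto_derive; reflexivity).
  rewrite <- (Derive_ext (fun t => f (t + 1)) f x Hp), (Derive_comp f (fun t => t + 1)), Hshift;
    [ring | apply Hd | auto_derive; exact I].
Qed.

Lemma smooth_periodic1_lip_bounded f : smooth f -> periodic1 f -> lip_bounded f.
Proof.
  intros Hs Hp.
  assert (Hd : forall x, ex_derive f x) by exact (Hs 1%nat).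
  assert (Hd2 : forall x, ex_derive (Derive f) x) by exact (Hs 2%nat).
  assert (Hf_cont : forall x, continuous f x)
    by (intro x; exact (@ex_derive_continuous R_AbsRing R_NormedModule f x (Hd x))).
  destruct (periodic1_continuous_bounded (Derive f)) as [L HL];
    [ apply periodic1_Derive; auto
    | intro x; exact (@ex_derive_continuous R_AbsRing R_NormedModule _ x (Hd2 x)) |].
  destruct (periodic1_continuous_bounded f Hp Hf_cont) as [M HM].
  exists L, M.
  repeat split; [exact (bounded_by_ge0 _ _ HL) | exact (bounded_by_ge0 _ _ HM) | | exact HM].
  intros x y. destruct (MVT_gen f y x (Derive f)) as [c [_ ->]].
  - intros; apply Derive_correct, Hd.
  - intros; apply continuity_pt_filterlim, Hf_cont.
  - rewrite Rabs_mult. apply Rmult_le_compat_r; [apply Rabs_pos | apply HL].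
Qed.

Lemma lip_bounded_const k : lip_bounded (fun _ => k).
Proof.
  exists 0, (Rabs k). repeat split; [lra | apply Rabs_pos | | intro; lra].
  intros x y. rewrite Rminus_eq_0, Rabs_R0. lra.
Qed.

Lemma lip_bounded_plus f g : lip_bounded f -> lip_bounded g -> lip_bounded (fun x => f x + g x).
Proof.
  intros [L1 [M1 [? [? [Lf Bf]]]]] [L2 [M2 [? [? [Lg Bg]]]]].
  exists (L1 + L2), (M1 + M2). repeat split; try lra.
  - intros x y. specialize (Lf x y). specialize (Lg x y).
    replace (f x + g x - (f y + g y)) with ((f x - f y) + (g x - g y)) by ring.
    eapply Rle_trans; [apply Rabs_triang | lra].
  - intro x. specialize (Bf x). specialize (Bg x).
    eapply Rle_trans; [apply Rabs_triang | lra].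
Qed.

Lemma lip_bounded_scal k f : lip_bounded f -> lip_bounded (fun x => k * f x).
Proof.
  intros [L [M [? [? [Lf Bf]]]]]. pose proof (Rabs_pos k).
  exists (Rabs k * L), (Rabs k * M). repeat split; try nra.
  - intros x y. rewrite <- Rmult_minus_distr_l, Rabs_mult, Rmult_assoc.
    apply Rmult_le_compat_l; auto.
  - intro x. rewrite Rabs_mult. apply Rmult_le_compat_l; auto.
Qed.

Lemma lip_bounded_ext f g : (forall x, f x = g x) -> lip_bounded f -> lip_bounded g.
Proof.
  intros E [L [M [? [? [Lf Bf]]]]]. exists L, M. repeat split; auto.
  - intros x y. rewrite <- !E. apply Lf.
  - intro x. rewrite <- E. apply Bf.
Qed.

(** * Integral solutions and Picard iteration *)

Definition sol_on (f : R -> R -> R) (a b : R) (g : R -> R) : Prop :=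
  forall s t, a <= s -> s <= t -> t <= b -> is_RInt (fun r => f r (g r)) s t (g t - g s).

Lemma sol_on_of_is_RInt f a b g x :
  a <= b -> (forall t, a <= t <= b -> is_RInt (fun r => f r (g r)) a t (g t - x)) ->
  g a = x /\ sol_on f a b g.
Proof.
  intros hab H.
  assert (Hga : g a = x).
  { pose proof (is_RInt_unique _ _ _ _ (H a ltac:(lra))) as E.
    rewrite RInt_point in E. unfold zero in E; simpl in E. lra. }
  split; [exact Hga|]. subst x. intros s t Has Hst Htb.
  replace (g t - g s) with (plus (opp (g s - g a)) (g t - g a))
    by (unfold plus, opp; simpl; ring).
  apply (@is_RInt_Chasles R_NormedModule) with a; [apply (@is_RInt_swap R_NormedModule)|];
    apply H; lra.
Qed.

Lemma sol_on_sub f a b a' b' g : a <= a' -> b' <= b -> sol_on f a b g -> sol_on f a' b' g.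
Proof. intros ? ? H s t ? ? ?. apply H; lra. Qed.

Lemma sol_on_ext f f' a b g g' :
  (forall r, a < r < b -> f r (g r) = f' r (g' r)) -> (forall r, a <= r <= b -> g r = g' r) ->
  sol_on f a b g -> sol_on f' a b g'.
Proof.
  intros Ef Eg H s t Has Hst Htb. rewrite <- (Eg t), <- (Eg s) by lra.
  apply (is_RInt_ext (fun r => f r (g r))); [|apply H; lra].
  intros r. rewrite Rmin_left, Rmax_right by lra. intros; apply Ef; lra.
Qed.

Lemma sol_on_glue f a b c g : a <= b <= c -> sol_on f a b g -> sol_on f b c g -> sol_on f a c g.
Proof.
  intros hb H1 H2 s t Has Hst Htc.
  destruct (Rle_dec t b); [apply H1; lra|]. destruct (Rle_dec b s); [apply H2; lra|].
  replace (g t - g s) with (plus (g b - g s) (g t - g b)) by (unfold plus; simpl; ring).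
  apply (@is_RInt_Chasles R_NormedModule) with b; [apply H1 | apply H2]; lra.
Qed.

Lemma sol_on_concat f a b c g1 g2 : a <= b <= c -> g2 b = g1 b ->
  sol_on f a b g1 -> sol_on f b c g2 ->
  sol_on f a c (fun r => if Rle_dec r b then g1 r else g2 r).
Proof.
  intros hb E H1 H2. apply sol_on_glue with b; [exact hb| |].
  - apply (sol_on_ext f f a b g1); [| |exact H1];
      intros r Hr; destruct Rle_dec; solve [reflexivity | lra].
  - apply (sol_on_ext f f b c g2); [| |exact H2];
      intros r Hr; destruct Rle_dec; try reflexivity; try lra.
    replace r with b by lra. exact E.
Qed.

(* Clamping the upper limit makes every iterate a globally defined Lipschitz
   function, so that all integrands below are continuous on the whole line. *)
Definition clamp (a b t : R) : R := Rmax a (Rmin b t).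

Fixpoint picard (F : R -> R) (x a b : R) (k : nat) : R -> R :=
  match k with
  | O => fun _ => x
  | S k => fun t => x + RInt (fun s => F (picard F x a b k s)) a (clamp a b t)
  end.

Lemma clamp_in a b t : a <= b -> a <= clamp a b t <= b.
Proof. intros. unfold clamp, Rmax, Rmin. repeat destruct Rle_dec; lra. Qed.

Lemma clamp_id a b t : a <= t <= b -> clamp a b t = t.
Proof. intros. unfold clamp, Rmax, Rmin. repeat destruct Rle_dec; lra. Qed.

Lemma clamp_lipschitz a b : a <= b -> lipschitz (clamp a b) 1.
Proof.
  intros hab t u. rewrite Rmult_1_l. unfold clamp, Rmax, Rmin, Rabs.
  repeat destruct Rle_dec; repeat destruct Rcase_abs; lra.
Qed.

Lemma ex_RInt_continuous_R (f : R -> R) a b : (forall s, continuous f s) -> ex_RInt f a b.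
Proof. intros H. apply (@ex_RInt_continuous R_CompleteNormedModule). intros; apply H. Qed.

Lemma lipschitz_comp f g L K : 0 <= L -> lipschitz f L -> lipschitz g K ->
  lipschitz (fun s => f (g s)) (L * K).
Proof.
  intros HL Hf Hg s r. eapply Rle_trans; [apply Hf|].
  rewrite Rmult_assoc. apply Rmult_le_compat_l; auto.
Qed.

Lemma abs_RInt_le_const_R (f : R -> R) c d B : (forall s, continuous f s) ->
  (forall s, Rmin c d <= s <= Rmax c d -> Rabs (f s) <= B) -> Rabs (RInt f c d) <= Rabs (d - c) * B.
Proof.
  intros Hf HB. apply (@norm_RInt_le_const_abs R_NormedModule f c d (RInt f c d) B HB).
  apply (@RInt_correct R_CompleteNormedModule), ex_RInt_continuous_R, Hf.
Qed.

Section Picard.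

Variables (F : R -> R) (L M x a b : R).
Hypotheses (HL : 0 <= L) (HM : 0 <= M) (HF : lipschitz F L) (HB : bounded_by F M) (hab : a <= b).

Lemma picard_lipschitz k : lipschitz (picard F x a b k) M.
Proof.
  induction k as [|k IH]; simpl; intros t u.
  - rewrite Rminus_eq_0, Rabs_R0. pose proof (Rabs_pos (t - u)). nra.
  - set (f := fun s => F (picard F x a b k s)).
    assert (Hf : forall s, continuous f s)
      by exact (lipschitz_continuous f _ (lipschitz_comp _ _ _ _ HL HF IH)).
    assert (E : RInt f a (clamp a b u) + RInt f (clamp a b u) (clamp a b t)
                = RInt f a (clamp a b t))
      by (apply (RInt_Chasles f); apply ex_RInt_continuous_R, Hf).
    replace (x + RInt f a (clamp a b t) - (x + RInt f a (clamp a b u)))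
      with (RInt f (clamp a b u) (clamp a b t)) by lra.
    eapply Rle_trans; [apply abs_RInt_le_const_R; [exact Hf | intros; apply HB]|].
    rewrite Rmult_comm. apply Rmult_le_compat_l; [exact HM|].
    pose proof (clamp_lipschitz a b hab t u). lra.
Qed.

Lemma picard_integrand_continuous k s : continuous (fun s => F (picard F x a b k s)) s.
Proof. exact (lipschitz_continuous _ _ (lipschitz_comp _ _ _ _ HL HF (picard_lipschitz k)) s). Qed.

Hypothesis hshort : L * (b - a) <= 1/2.

Lemma picard_step k t :
  Rabs (picard F x a b (S k) t - picard F x a b k t) <= M * (b - a) * (1/2) ^ k.
Proof.
  revert t. induction k as [|k IH]; intro t; pose proof (clamp_in a b t hab).
  - simpl. replace (x + _ - x) with (RInt (fun _ => F x) a (clamp a b t)) by lra.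
    eapply Rle_trans;
      [apply abs_RInt_le_const_R; [intro; apply continuous_const | intros; apply HB]|].
    rewrite Rabs_right by lra. nra.
  - set (p := picard F x a b).
    change (Rabs ((x + RInt (fun s => F (p (S k) s)) a (clamp a b t))
                  - (x + RInt (fun s => F (p k s)) a (clamp a b t))) <= M * (b - a) * (1/2) ^ S k).
    assert (E : RInt (fun s => F (p (S k) s) - F (p k s)) a (clamp a b t)
                = RInt (fun s => F (p (S k) s)) a (clamp a b t)
                  - RInt (fun s => F (p k s)) a (clamp a b t))
      by (apply (RInt_minus (V := R_CompleteNormedModule));
          apply ex_RInt_continuous_R, picard_integrand_continuous).
    replace (x + _ - (x + _))
      with (RInt (fun s => F (p (S k) s) - F (p k s)) a (clamp a b t)) by lra.
    eapply Rle_trans.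
    { apply abs_RInt_le_const_R with (B := L * (M * (b - a) * (1/2) ^ k)).
      - intro s. apply (continuous_minus (fun s => F (p (S k) s)) (fun s => F (p k s)));
          apply picard_integrand_continuous.
      - intros s _. eapply Rle_trans; [apply HF|]. apply Rmult_le_compat_l; [exact HL | apply IH]. }
    assert (HQ : 0 <= M * (b - a) * (1/2) ^ k)
      by (pose proof (pow_le (1/2) k ltac:(lra)); apply Rmult_le_pos; nra).
    assert ((clamp a b t - a) * L <= 1/2) by nra.
    rewrite Rabs_right by lra. simpl pow. nra.
Qed.

Lemma picard_cauchy k j t :
  Rabs (picard F x a b (k + j) t - picard F x a b k t) <= 2 * M * (b - a) * (1/2) ^ k.
Proof.
  cut (Rabs (picard F x a b (k + j) t - picard F x a b k t)
       <= 2 * M * (b - a) * ((1/2) ^ k - (1/2) ^ (k + j))).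
  { assert (0 <= 2 * M * (b - a) * (1/2) ^ (k + j))
      by (pose proof (pow_le (1/2) (k + j) ltac:(lra)); apply Rmult_le_pos; nra).
    lra. }
  induction j as [|j IH].
  - rewrite Nat.add_0_r, !Rminus_eq_0, Rabs_R0. lra.
  - rewrite Nat.add_succ_r. pose proof (picard_step (k + j) t).
    replace (picard F x a b (S (k + j)) t - picard F x a b k t) with
      ((picard F x a b (S (k + j)) t - picard F x a b (k + j) t)
       + (picard F x a b (k + j) t - picard F x a b k t)) by ring.
    eapply Rle_trans; [apply Rabs_triang|]. simpl pow. lra.
Qed.

End Picard.

Lemma geometric_eventually_lt C eps :
  0 < eps -> exists N, forall n, (N <= n)%nat -> C * (1/2) ^ n < eps.
Proof.
  intros Heps.
  assert (Hlim : is_lim_seq (fun n => C * (1/2) ^ n) 0).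
  { replace (Finite 0) with (Rbar_mult C 0) by (simpl; f_equal; ring).
    apply is_lim_seq_scal_l, is_lim_seq_geom. rewrite Rabs_right; lra. }
  destruct (proj2 (is_lim_seq_spec _ _) Hlim (mkposreal eps Heps)) as [N HN].
  exists N. intros n Hn. specialize (HN n Hn). simpl in HN.
  rewrite Rminus_0_r in HN. eapply Rle_lt_trans; [apply Rle_abs | exact HN].
Qed.

Lemma geometric_cauchy_limit (u : nat -> R -> R) C :
  (forall k j t, Rabs (u (k + j)%nat t - u k t) <= C * (1/2) ^ k) ->
  exists g : R -> R, (forall t, is_lim_seq (fun k => u k t) (g t)) /\
            forall k t, Rabs (g t - u k t) <= C * (1/2) ^ k.
Proof.
  intros Hc.
  assert (Hex : forall t, ex_finite_lim_seq (fun k => u k t)).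
  { intro t. apply ex_lim_seq_cauchy_corr. intros eps.
    destruct (geometric_eventually_lt C eps (cond_pos eps)) as [N HN]. exists N.
    intros n m Hn Hm. destruct (le_lt_dec n m).
    - replace m with (n + (m - n))%nat by lia. rewrite Rabs_minus_sym.
      eapply Rle_lt_trans; [apply Hc | apply HN; lia].
    - replace n with (m + (n - m))%nat by lia.
      eapply Rle_lt_trans; [apply Hc | apply HN; lia]. }
  exists (fun t => real (Lim_seq (fun k => u k t))).
  assert (Hlim : forall t, is_lim_seq (fun k => u k t) (real (Lim_seq (fun k => u k t))))
    by (intro t; apply Lim_seq_correct', Hex).
  split; [exact Hlim|]. intros k t. apply Rle_plus_epsilon. intros eps Heps.
  destruct (proj2 (is_lim_seq_spec _ _) (Hlim t) (mkposreal eps Heps)) as [N HN].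
  specialize (HN (k + N)%nat ltac:(lia)). specialize (Hc k N t). simpl in HN.
  rewrite Rabs_minus_sym in HN.
  pose proof (Rabs_triang (real (Lim_seq (fun k => u k t)) - u (k + N)%nat t)
                          (u (k + N)%nat t - u k t)) as Htri.
  replace (_ - u (k + N)%nat t + (u (k + N)%nat t - u k t))
    with (real (Lim_seq (fun k => u k t)) - u k t) in Htri by ring.
  lra.
Qed.

Lemma is_RInt_geometric_limit (f : nat -> R -> R) (g : R -> R) (a b C I : R) :
  (forall k, ex_RInt (f k) a b) -> (forall k s, Rabs (f k s - g s) <= C * (1/2) ^ k) ->
  is_lim_seq (fun k => RInt (f k) a b) I -> is_RInt g a b I.
Proof.
  intros Hex Hbd Hlim.
  destruct (filterlim_RInt (V := R_CompleteNormedModule) f a b eventually eventually_filter g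
             (fun k => RInt (f k) a b)) as [If [HIf HgIf]].
  - intro k. apply (@RInt_correct R_CompleteNormedModule), Hex.
  - apply filterlim_locally. intros eps.
    destruct (geometric_eventually_lt C eps (cond_pos eps)) as [N HN].
    exists N. intros n Hn s. apply (Rle_lt_trans _ _ _ (Hbd n s)), HN, Hn.
  - assert (E : Finite If = Finite I)
      by (rewrite <- (is_lim_seq_unique _ _ Hlim); symmetry; exact (is_lim_seq_unique _ If HIf)).
    injection E as E. rewrite <- E. exact HgIf.
Qed.

Lemma sol_exists_short F L M a b x :
  0 <= L -> lipschitz F L -> bounded_by F M -> a <= b -> L * (b - a) <= 1/2 ->
  exists g, g a = x /\ sol_on (fun _ => F) a b g.
Proof.
  intros HL HF HB hab hshort. pose proof (bounded_by_ge0 F M HB) as HM.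
  set (p := picard F x a b).
  destruct (geometric_cauchy_limit p (2 * M * (b - a))) as [g [Hlim Hbd]].
  { exact (picard_cauchy F L M x a b HL HM HF HB hab hshort). }
  exists g. apply sol_on_of_is_RInt; [exact hab|]. intros t Ht.
  apply (is_RInt_geometric_limit (fun k s => F (p k s)) _ a t (L * (2 * M * (b - a)))).
  - intro k. apply ex_RInt_continuous_R, (picard_integrand_continuous F L M x a b HL HM HF HB hab).
  - intros k s. eapply Rle_trans; [apply HF|]. rewrite Rmult_assoc.
    apply Rmult_le_compat_l; [exact HL|]. rewrite Rabs_minus_sym. apply Hbd.
  - apply (is_lim_seq_ext (fun k => p (S k) t - x)).
    + intro k. unfold p. simpl. rewrite clamp_id by lra. ring.
    + apply is_lim_seq_minus';
        [apply (is_lim_seq_incr_1 (fun k => p k t)), Hlim | apply is_lim_seq_const].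
Qed.

Lemma sol_exists F L M a b x :
  0 <= L -> lipschitz F L -> bounded_by F M -> a <= b ->
  exists g, g a = x /\ sol_on (fun _ => F) a b g.
Proof.
  intros HL HF HB hab.
  set (tau := / (2 * (L + 1))).
  assert (Htau : 0 < tau) by (apply Rinv_0_lt_compat; lra).
  assert (Hshort : L * tau <= 1/2)
    by (unfold tau; apply Rmult_le_reg_l with (2 * (L + 1)); [lra | field_simplify; lra]).
  assert (Hsteps : forall n, exists g, g a = x /\ sol_on (fun _ => F) a (a + INR (S n) * tau) g).
  { induction n as [|n [g1 [Hg1 S1]]].
    - apply (sol_exists_short F L M); auto; simpl; lra.
    - set (c := a + INR (S n) * tau).
      assert (Hc : a <= c) by (unfold c; pose proof (pos_INR (S n)); nra).
      destruct (sol_exists_short F L M c (c + tau) (g1 c)) as [g2 [Hg2 S2]]; auto;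
        [lra | replace (c + tau - c) with tau by ring; exact Hshort|].
      exists (fun r => if Rle_dec r c then g1 r else g2 r). split.
      + destruct Rle_dec; [exact Hg1 | lra].
      + replace (a + INR (S (S n)) * tau) with (c + tau) by (unfold c; rewrite (S_INR (S n)); ring).
        apply sol_on_concat; auto; lra. }
  destruct (INR_unbounded ((b - a) / tau)) as [n Hn].
  destruct (Hsteps n) as [g [Hg Sg]]. exists g. split; [exact Hg|].
  apply (sol_on_sub _ a (a + INR (S n) * tau)); [lra| |exact Sg].
  rewrite S_INR. apply Rmult_gt_compat_r with (r := tau) in Hn; [|exact Htau].
  replace ((b - a) / tau * tau) with (b - a) in Hn by (field; lra). nra.
Qed.

(** * Attraction to a point *)

Definition pushes_toward (F : R -> R) (z eps A m : R) : Prop :=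
  (forall w, z - A <= w <= z - eps -> m <= F w) /\
  (forall w, z + eps <= w <= z + A -> F w <= - m).

Section Attraction.

Variables (F : R -> R) (M a b : R) (g : R -> R).
Hypotheses (HB : bounded_by F M) (Hg : sol_on (fun _ => F) a b g).

Lemma sol_increment_le s r : a <= s -> s <= r -> r <= b -> Rabs (g r - g s) <= (r - s) * M.
Proof.
  intros Has Hsr Hrb.
  exact (norm_RInt_le_const (V := R_NormedModule) _ s r _ M Hsr (fun u _ => HB (g u))
           (Hg s r Has Hsr Hrb)).
Qed.

Lemma sol_increment_upper s r K : a <= s -> s <= r -> r <= b ->
  (forall u, s < u < r -> F (g u) <= K) -> g r - g s <= (r - s) * K.
Proof.
  intros Has Hsr Hrb HK.
  exact (is_RInt_le _ _ s r _ _ Hsr (Hg s r Has Hsr Hrb) (is_RInt_const s r K) HK).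
Qed.

Lemma sol_increment_lower s r K : a <= s -> s <= r -> r <= b ->
  (forall u, s < u < r -> K <= F (g u)) -> (r - s) * K <= g r - g s.
Proof.
  intros Has Hsr Hrb HK.
  exact (is_RInt_le _ _ s r _ _ Hsr (is_RInt_const s r K) (Hg s r Has Hsr Hrb) HK).
Qed.

Variables (z eps A m : R).
Hypotheses (Heps : 0 <= eps) (Hpush : pushes_toward F z eps A m).

(* In one step the solution moves by at most M d; starting at distance at least eps + M d
   from z it therefore stays on one side, inside the region where F pushes it back. *)
Lemma attract_step s d : a <= s -> 0 <= d -> s + d <= b -> Rabs (g s - z) + M * d <= A ->
  Rabs (g (s + d) - z) <= Rmax (eps + 2 * M * d) (Rabs (g s - z) - m * d).
Proof.
  intros Has Hd Hdb HA. destruct Hpush as [Hleft Hright].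
  assert (Hmove : forall r, s <= r <= s + d -> g s - M * d <= g r <= g s + M * d).
  { intros r Hr. apply Rabs_le_between'. eapply Rle_trans; [apply sol_increment_le; lra|].
    pose proof (bounded_by_ge0 F M HB). nra. }
  pose proof (Hmove (s + d) ltac:(lra)) as Hend.
  destruct (Rle_dec (eps + M * d) (Rabs (g s - z))) as [Hfar|Hnear].
  - apply Rle_trans with (Rabs (g s - z) - m * d); [|apply Rmax_r].
    destruct (Rle_dec z (g s)).
    + rewrite (Rabs_right (g s - z)) in * by lra.
      assert (g (s + d) - g s <= (s + d - s) * - m).
      { apply sol_increment_upper; try lra. intros u Hu.
        pose proof (Hmove u ltac:(lra)). apply Hright; lra. }
      rewrite Rabs_right by lra. lra.
    + rewrite (Rabs_left (g s - z)) in * by lra.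
      assert ((s + d - s) * m <= g (s + d) - g s).
      { apply sol_increment_lower; try lra. intros u Hu.
        pose proof (Hmove u ltac:(lra)). apply Hleft; lra. }
      rewrite Rabs_left1 by lra. lra.
  - apply Rle_trans with (eps + 2 * M * d); [|apply Rmax_l].
    pose proof (Rabs_triang (g (s + d) - g s) (g s - z)).
    replace (g (s + d) - g s + (g s - z)) with (g (s + d) - z) in * by ring.
    pose proof (proj2 (Rabs_le_between' (g (s + d)) (g s) (M * d)) Hend). lra.
Qed.

Lemma attract_iter d (N : nat) : 0 <= d -> a + INR N * d <= b -> 0 <= m ->
  eps + 3 * M * d <= A -> Rabs (g a - z) + M * d <= A ->
  forall k, (k <= N)%nat ->
  Rabs (g (a + INR k * d) - z) <= Rmax (eps + 2 * M * d) (Rabs (g a - z) - m * (INR k * d)).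
Proof.
  intros Hd HN Hm HA HA0 k. induction k as [|k IH]; intro Hk.
  - simpl. rewrite Rmult_0_l, Rplus_0_r, Rmult_0_r, Rminus_0_r. apply Rmax_r.
  - specialize (IH ltac:(lia)).
    assert (Hk' : INR (S k) <= INR N) by (apply le_INR; lia). rewrite S_INR in *.
    pose proof (pos_INR k).
    assert (0 <= m * (INR k * d)) by (apply Rmult_le_pos; nra).
    replace (a + (INR k + 1) * d) with (a + INR k * d + d) by ring.
    eapply Rle_trans.
    + apply attract_step; try nra. revert IH. unfold Rmax. destruct Rle_dec; intros; lra.
    + revert IH. unfold Rmax. repeat destruct Rle_dec; intros; nra.
Qed.

End Attraction.

(* The radius 3/8 + 2 eps lets a second phase start from the 2 eps-neighbourhood left by a
   first one, around a point within 3/8 of the new target. *)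
Definition steers (F : R -> R) (z eps : R) : Prop :=
  forall (j : Z) t0 g, sol_on (fun _ => F) t0 (t0 + 1/2) g ->
    Rabs (g t0 - (z + IZR j)) <= 3/8 + 2 * eps -> Rabs (g (t0 + 1/2) - (z + IZR j)) <= 2 * eps.

Lemma steers_of_pushes_toward F M z eps : bounded_by F M -> 0 < eps <= 1/64 ->
  (forall j : Z, pushes_toward F (z + IZR j) eps (7/16) 1) -> steers F z eps.
Proof.
  intros HB He Hpush j t0 g Hg H0. pose proof (bounded_by_ge0 F M HB) as HM.
  destruct (INR_unbounded (M / eps)) as [N HN].
  assert (HNpos : 0 < INR N)
    by (pose proof (Rle_mult_inv_pos M eps HM ltac:(lra)); unfold Rdiv in HN; lra).
  set (d := / (2 * INR N)).
  assert (Hd : 0 < d) by (apply Rinv_0_lt_compat; lra).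
  assert (HNd : t0 + INR N * d = t0 + 1/2) by (unfold d; field; lra).
  assert (HMd : M * d <= eps / 2).
  { apply Rmult_gt_compat_r with (r := eps) in HN; [|lra].
    replace (M / eps * eps) with M in HN by (field; lra).
    unfold d. apply Rmult_le_reg_r with (2 * INR N); [lra|].
    replace (M * / (2 * INR N) * (2 * INR N)) with M by (field; lra). nra. }
  pose proof (attract_iter F M t0 (t0 + 1/2) g HB Hg (z + IZR j) eps (7/16) 1 ltac:(lra) (Hpush j)
                d N ltac:(lra) ltac:(lra) ltac:(lra) ltac:(lra) ltac:(lra) N (le_n N)) as Hfinal.
  rewrite HNd in Hfinal. eapply Rle_trans; [exact Hfinal|].
  unfold Rmax. destruct Rle_dec; lra.
Qed.

(** * The circle *)

Lemma tdist_nonneg a b : 0 <= tdist a b.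
Proof. unfold tdist. destruct (base_fp (a - b)). apply Rmin_glb; lra. Qed.

Lemma tdist_le_shift a b (k : Z) : tdist a b <= Rabs (a - b - IZR k).
Proof.
  unfold tdist. destruct (base_fp (a - b)). set (f := frac_part (a - b)) in *.
  replace (a - b - IZR k) with (f + IZR (Int_part (a - b) - k))
    by (rewrite minus_IZR; unfold f, frac_part; ring).
  destruct (Z_le_gt_dec 0 (Int_part (a - b) - k)) as [Hj|Hj].
  - apply IZR_le in Hj. rewrite Rabs_right by lra. pose proof (Rmin_l f (1 - f)). lra.
  - assert (Hj' : (Int_part (a - b) - k <= -1)%Z) by lia. apply IZR_le in Hj'.
    rewrite Rabs_left by lra. pose proof (Rmin_r f (1 - f)). lra.
Qed.

Lemma sin_period_IZR th (j : Z) : sin (th + 2 * PI * IZR j) = sin th.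
Proof.
  assert (Hp : periodic1 (fun t => sin (2 * PI * t))).
  { intro t. replace (2 * PI * (t + 1)) with (2 * PI * t + 2 * PI) by ring.
    rewrite sin_plus, sin_2PI, cos_2PI. ring. }
  pose proof PI_RGT_0.
  pose proof (periodic1_IZR _ Hp (th / (2 * PI)) j) as E. simpl in E.
  replace (2 * PI * (th / (2 * PI) + IZR j)) with (th + 2 * PI * IZR j) in E by (field; lra).
  replace (2 * PI * (th / (2 * PI))) with th in E by (field; lra). exact E.
Qed.

Lemma sin_le_of_range a0 th : 0 < a0 <= PI / 2 -> a0 <= th <= PI - a0 -> sin a0 <= sin th.
Proof.
  intros Ha Hth. pose proof PI_RGT_0.
  destruct (Rle_dec th (PI / 2)).
  - apply sin_incr_1; lra.
  - rewrite <- (sin_PI_x th). apply sin_incr_1; lra.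
Qed.

Lemma sinusoid_pushes_toward D M0 K z eps :
  bounded_by D M0 -> 0 < eps <= 1/16 -> K * sin (2 * PI * eps) = 1 + M0 ->
  forall j : Z, pushes_toward (fun w => D w - K * sin (2 * PI * (w - z))) (z + IZR j) eps (7/16) 1.
Proof.
  intros HD He HK j. pose proof PI_RGT_0. pose proof (bounded_by_ge0 D M0 HD).
  assert (Hsin : forall u, eps <= u <= 7/16 -> sin (2 * PI * eps) <= sin (2 * PI * u))
    by (intros; apply sin_le_of_range; nra).
  assert (Hs0 : 0 < sin (2 * PI * eps)) by (apply sin_gt_0; nra).
  assert (HK0 : 0 <= K) by nra.
  assert (Hshift : forall w, sin (2 * PI * (w - z)) = sin (2 * PI * (w - (z + IZR j)))).
  { intro w. rewrite <- (sin_period_IZR (2 * PI * (w - (z + IZR j))) j). f_equal. ring. }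
  split; intros w Hw; rewrite Hshift; pose proof (proj1 (Rabs_le_between _ _) (HD w)).
  - replace (2 * PI * (w - (z + IZR j))) with (- (2 * PI * (z + IZR j - w))) by ring.
    rewrite sin_neg. pose proof (Hsin (z + IZR j - w) ltac:(lra)). nra.
  - pose proof (Hsin (w - (z + IZR j)) ltac:(lra)). nra.
Qed.

Definition close_mod1 (z p : R) : Prop := exists k : Z, Rabs (p - z - IZR k) <= 3/8.

Lemma close_mod1_frac_part z p : close_mod1 z (frac_part p) -> close_mod1 z p.
Proof.
  intros [k Hk]. exists (k + Int_part p)%Z. rewrite plus_IZR.
  replace (p - z - (IZR k + IZR (Int_part p))) with (frac_part p - z - IZR k)
    by (unfold frac_part; ring).
  exact Hk.
Qed.

(* A point of [0,1) fails to be close to at most one of the quarters 0, 1/4, 1/2, 3/4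
   (the four exceptional arcs are disjoint), so three points leave one quarter free. *)
Lemma quarter_close_mod1_all p1 p2 p3 :
  exists z, close_mod1 z p1 /\ close_mod1 z p2 /\ close_mod1 z p3.
Proof.
  cut (forall q1 q2 q3, 0 <= q1 < 1 -> 0 <= q2 < 1 -> 0 <= q3 < 1 ->
       exists z, close_mod1 z q1 /\ close_mod1 z q2 /\ close_mod1 z q3).
  { intros H. destruct (base_fp p1), (base_fp p2), (base_fp p3).
    destruct (H (frac_part p1) (frac_part p2) (frac_part p3)) as (z & ? & ? & ?); try lra.
    exists z. repeat split; apply close_mod1_frac_part; assumption. }
  intros q1 q2 q3 Hq1 Hq2 Hq3.
  pose (all3 (C : R -> Prop) := C q1 /\ C q2 /\ C q3).
  assert (Hpick : forall (C : R -> Prop) z, (forall q, 0 <= q < 1 -> C q -> close_mod1 z q) ->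
            all3 C -> exists z, close_mod1 z q1 /\ close_mod1 z q2 /\ close_mod1 z q3).
  { intros C z HC (C1 & C2 & C3). exists z. repeat split; apply HC; assumption. }
  assert (Hk : forall z q (k : Z), Rabs (q - z - IZR k) <= 3/8 -> close_mod1 z q)
    by (intros z q k; exists k; assumption).
  destruct (classic (all3 (fun q => 1/8 <= q <= 7/8))) as [Hall|N1].
  { refine (Hpick _ (1/2) _ Hall). intros q _ Hq. apply (Hk _ _ 0%Z), Rabs_le. simpl. lra. }
  destruct (classic (all3 (fun q => q <= 3/8 \/ 5/8 <= q))) as [Hall|N2].
  { refine (Hpick _ 0 _ Hall). intros q Hq [Hq'|Hq'];
      [apply (Hk _ _ 0%Z) | apply (Hk _ _ 1%Z)]; apply Rabs_le; simpl; lra. }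
  destruct (classic (all3 (fun q => q <= 5/8 \/ 7/8 <= q))) as [Hall|N3].
  { refine (Hpick _ (1/4) _ Hall). intros q Hq [Hq'|Hq'];
      [apply (Hk _ _ 0%Z) | apply (Hk _ _ 1%Z)]; apply Rabs_le; simpl; lra. }
  destruct (classic (all3 (fun q => q <= 1/8 \/ 3/8 <= q))) as [Hall|N4].
  { refine (Hpick _ (3/4) _ Hall). intros q Hq [Hq'|Hq'];
      [apply (Hk _ _ (-1)%Z) | apply (Hk _ _ 0%Z)]; apply Rabs_le; simpl; lra. }
  exfalso. clear Hpick Hk. unfold all3 in *.
  repeat match goal with
  | H : ~ (_ /\ _) |- _ => apply not_and_or in H
  | H : ~ (_ \/ _) |- _ => apply not_or_and in H
  | H : ~ (_ <= _) |- _ => apply Rnot_le_lt in H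
  | H : _ /\ _ |- _ => destruct H
  | H : _ \/ _ |- _ => destruct H
  end; lra.
Qed.

(** * Two-step controls *)

Definition two_step (v0 v1 : R * R) (s : R) : R * R :=
  if Rlt_dec s (1/2) then v0 else if Rlt_dec s 1 then v1 else (0, 0).

Lemma two_step_pc_cs v0 v1 : pc_cs (two_step v0 v1).
Proof.
  exists 2%nat, (fun i => match i with 0%nat => 0 | 1%nat => 1/2 | _ => 1 end),
    (fun i => match i with 0%nat => v0 | _ => v1 end).
  split; [reflexivity|]. split; [|split].
  - intros [|[|i]] Hi; simpl; lra || lia.
  - intros [|[|i]] s Hi Hs; simpl in *; unfold two_step; [| |lia];
      repeat destruct Rlt_dec; solve [reflexivity | lra].
  - intros s Hs. simpl in Hs. unfold two_step. repeat destruct Rlt_dec; solve [reflexivity | lra].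
Qed.

Section Control.

Variables (c sigma : R) (a S b1 bm1 : R -> R).
Hypotheses (Hsigma : 0 < sigma)
  (Ha : smooth a) (Ha1 : periodic1 a) (HS : smooth S) (HS1 : periodic1 S)
  (Hb1 : smooth b1) (Hb11 : periodic1 b1) (Hbm1 : smooth bm1) (Hbm11 : periodic1 bm1)
  (Hspan : span_is_sinusoids b1 bm1).

Definition control_field (v : R * R) (w : R) : R :=
  drift c sigma a S w + sigma * (b1 w * fst v + bm1 w * snd v).

Lemma drift_lip_bounded : lip_bounded (drift c sigma a S).
Proof.
  apply (lip_bounded_ext (fun w => c + (sigma ^ 2 * a w + (sigma ^ 2 * - / 2) * S w)));
    [intro w; unfold drift; ring|].
  apply lip_bounded_plus; [apply lip_bounded_const|].
  apply lip_bounded_plus; apply lip_bounded_scal, smooth_periodic1_lip_bounded; assumption.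
Qed.

Lemma control_field_lip_bounded v : lip_bounded (control_field v).
Proof.
  apply (lip_bounded_ext (fun w => drift c sigma a S w
                                   + ((sigma * fst v) * b1 w + (sigma * snd v) * bm1 w)));
    [intro w; unfold control_field; ring|].
  apply lip_bounded_plus; [exact drift_lip_bounded|].
  apply lip_bounded_plus; apply lip_bounded_scal, smooth_periodic1_lip_bounded; assumption.
Qed.

Lemma steering_control z eps : 0 < eps <= 1/64 -> exists v, steers (control_field v) z eps.
Proof.
  intros He. pose proof PI_RGT_0.
  destruct drift_lip_bounded as (_ & M0 & _ & _ & _ & HD).
  assert (Hs : 0 < sin (2 * PI * eps)) by (apply sin_gt_0; pose proof PI_4; nra).
  set (K := (1 + M0) / sin (2 * PI * eps)).
  assert (HK : K * sin (2 * PI * eps) = 1 + M0) by (unfold K; field; lra).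
  destruct (proj2 Hspan (- K / sigma) (- (2 * PI * z))) as (al & be & E).
  exists (al, be).
  assert (Efield : forall w,
             control_field (al, be) w = drift c sigma a S w - K * sin (2 * PI * (w - z))).
  { intro w. unfold control_field; simpl.
    replace (b1 w * al + bm1 w * be) with (al * b1 w + be * bm1 w) by ring. rewrite E.
    replace (2 * PI * w + - (2 * PI * z)) with (2 * PI * (w - z)) by ring. field. lra. }
  destruct (control_field_lip_bounded (al, be)) as (_ & M & _ & _ & _ & HB).
  apply (steers_of_pushes_toward _ M); [exact HB | exact He|]. intro j.
  destruct (sinusoid_pushes_toward _ M0 K z eps HD ltac:(lra) HK j) as [Hl Hr].
  split; intros w Hw; rewrite Efield; [apply Hl | apply Hr]; exact Hw.
Qed.

Lemma two_step_sol_exists v0 v1 x : exists g, ctrl_sol c sigma a S b1 bm1 (two_step v0 v1) x g.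
Proof.
  destruct (control_field_lip_bounded v0) as (L0 & M0 & HL0 & _ & HF0 & HB0).
  destruct (control_field_lip_bounded v1) as (L1 & M1 & HL1 & _ & HF1 & HB1).
  destruct (sol_exists _ L0 M0 0 (1/2) x HL0 HF0 HB0 ltac:(lra)) as (ga & Hga & Sa).
  destruct (sol_exists _ L1 M1 (1/2) 1 (ga (1/2)) HL1 HF1 HB1 ltac:(lra)) as (gb & Hgb & Sb).
  set (g := fun r => if Rle_dec r (1/2) then ga r else gb r).
  assert (Hsol : sol_on (fun r => control_field (two_step v0 v1 r)) 0 1 g).
  { apply sol_on_concat; [lra | exact Hgb | |].
    - apply (sol_on_ext (fun _ => control_field v0) _ 0 (1/2) ga ga); [|reflexivity|exact Sa].
      intros r Hr. unfold two_step. destruct Rlt_dec; [reflexivity | lra].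
    - apply (sol_on_ext (fun _ => control_field v1) _ (1/2) 1 gb gb); [|reflexivity|exact Sb].
      intros r Hr. unfold two_step. repeat destruct Rlt_dec; solve [reflexivity | lra]. }
  assert (Hg0 : g 0 = x) by (unfold g; destruct Rle_dec; [exact Hga | lra]).
  exists g. intros t Ht. rewrite <- Hg0. exact (Hsol 0 t ltac:(lra) ltac:(lra) ltac:(lra)).
Qed.

Lemma two_step_sol_phases v0 v1 x g :
  ctrl_sol c sigma a S b1 bm1 (two_step v0 v1) x g ->
  g 0 = x /\ sol_on (fun _ => control_field v0) 0 (0 + 1/2) g
          /\ sol_on (fun _ => control_field v1) (1/2) (1/2 + 1/2) g.
Proof.
  intros Hg.
  destruct (sol_on_of_is_RInt (fun r => control_field (two_step v0 v1 r)) 0 1 g x ltac:(lra) Hg)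
    as [Hg0 Hsol].
  split; [exact Hg0|]. split.
  - apply (sol_on_ext (fun r => control_field (two_step v0 v1 r)) _ 0 (0 + 1/2) g g);
      [| reflexivity | apply (sol_on_sub _ 0 1); [lra | lra | exact Hsol]].
    intros r Hr. unfold two_step. destruct Rlt_dec; [reflexivity | lra].
  - apply (sol_on_ext (fun r => control_field (two_step v0 v1 r)) _ (1/2) (1/2 + 1/2) g g);
      [| reflexivity | apply (sol_on_sub _ 0 1); [lra | lra | exact Hsol]].
    intros r Hr. unfold two_step. repeat destruct Rlt_dec; solve [reflexivity | lra].
Qed.

Lemma two_step_steers v0 v1 z y eps x g : 0 <= eps ->
  steers (control_field v0) z eps -> steers (control_field v1) y eps ->
  close_mod1 z x -> close_mod1 z y ->
  ctrl_sol c sigma a S b1 bm1 (two_step v0 v1) x g -> tdist (g 1) y <= 2 * eps.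
Proof.
  intros He Hv0 Hv1 [k Hk] [k' Hk'] Hg.
  destruct (two_step_sol_phases v0 v1 x g Hg) as (Hg0 & S0 & S1).
  assert (Hmid : Rabs (g (0 + 1/2) - (z + IZR k)) <= 2 * eps).
  { apply Hv0; [exact S0|]. rewrite Hg0.
    replace (x - (z + IZR k)) with (x - z - IZR k) by ring. lra. }
  assert (Hend : Rabs (g (1/2 + 1/2) - (y + IZR (k - k'))) <= 2 * eps).
  { apply Hv1; [exact S1|]. rewrite Rplus_0_l in Hmid.
    replace (g (1/2) - (y + IZR (k - k'))) with ((g (1/2) - (z + IZR k)) - (y - z - IZR k'))
      by (rewrite minus_IZR; ring).
    eapply Rle_trans; [apply Rabs_triang|]. rewrite Rabs_Ropp. lra. }
  replace (1/2 + 1/2) with 1 in Hend by field.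
  eapply Rle_trans; [apply (tdist_le_shift _ _ (k - k'))|].
  replace (g 1 - y - IZR (k - k')) with (g 1 - (y + IZR (k - k'))) by ring. exact Hend.
Qed.

End Control.

Theorem lemma4p11 (c sigma : R) (a S b1 bm1 : R -> R) :
  0 < sigma ->
  smooth a -> periodic1 a ->
  smooth S -> periodic1 S ->
  smooth b1 -> periodic1 b1 ->
  smooth bm1 -> periodic1 bm1 ->
  span_is_sinusoids b1 bm1 ->
  forall x1 x2 y : R, tdist x1 x2 <> 0 ->
  exists h : R -> R * R, pc_cs h /\
    (exists g1, ctrl_sol c sigma a S b1 bm1 h x1 g1) /\
    (exists g2, ctrl_sol c sigma a S b1 bm1 h x2 g2) /\
    forall g1 g2, ctrl_sol c sigma a S b1 bm1 h x1 g1 ->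
                  ctrl_sol c sigma a S b1 bm1 h x2 g2 ->
      Rmax (tdist (g1 1) y) (tdist (g2 1) y) <= 3 / 2 * tdist x1 x2.
Proof.
  intros Hsigma Ha Ha1 HS HS1 Hb1 Hb11 Hbm1 Hbm11 Hspan x1 x2 y Hd.
  assert (Hd0 : 0 < tdist x1 x2)
    by (destruct (tdist_nonneg x1 x2) as [Hlt|Heq]; [exact Hlt | congruence]).
  set (eps := Rmin (1/64) (tdist x1 x2 / 2)).
  assert (He : 0 < eps <= 1/64) by (unfold eps, Rmin; destruct Rle_dec; lra).
  assert (He2 : 2 * eps <= tdist x1 x2) by (unfold eps, Rmin; destruct Rle_dec; lra).
  destruct (quarter_close_mod1_all x1 x2 y) as (z & Hz1 & Hz2 & Hzy).
  assert (Hsteer : forall target, exists v, steers (control_field c sigma a S b1 bm1 v) target eps)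
    by (intro; apply steering_control; assumption).
  destruct (Hsteer z) as [v0 Hv0]. destruct (Hsteer y) as [v1 Hv1].
  exists (two_step v0 v1). split; [apply two_step_pc_cs|].
  split; [|split]; [apply two_step_sol_exists; assumption ..|].
  intros g1 g2 G1 G2.
  pose proof (two_step_steers c sigma a S b1 bm1 v0 v1 z y eps x1 g1 ltac:(lra) Hv0 Hv1 Hz1 Hzy G1).
  pose proof (two_step_steers c sigma a S b1 bm1 v0 v1 z y eps x2 g2 ltac:(lra) Hv0 Hv1 Hz2 Hzy G2).
  apply Rmax_lub; lra.
Qed.
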